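(* Let $p\in(1,\infty)$ be such that $\gamma_{p,w}:=\gamma\, n^{1/p}(w_{\max}/w_{\min})^{1/p}<1$, let $Q^*_\lambda$ be the unique fixed point of $F_\lambda$, and let $\theta^*_p:=\arg\min_{\theta\in\mathbb{R}^d} f_p(\theta)$, where $f_p(\theta)=\frac1p\|F_\lambda(\Phi\theta)-\Phi\theta\|_{p,w}^p$. Then \[ \|Q_{\theta^*_p}-Q^*_\lambda\|_{p,w}\le\frac{1+\gamma_{p,w}}{1-\gamma_{p,w}}\min_{\theta\in\mathbb{R}^d}\|Q_\theta-Q^*_\lambda\|_{p,w}. \]
   Context: Finite discounted MDP with state space $\mathcal S$, action space $\mathcal A$, transition probabilities $P(s'\mid s,a)$, expected reward $R(s,a)$, discount $\gamma\in[0,1)$; $n=|\mathcal S||\mathcal A|$ and Q-functions are vectors in $\mathbb{R}^n$ indexed by $(s,a)$. For $\lambda>0$, $(F_\lambda Q)(s,a) := R(s,a)+\gamma\sum_{s'}P(s'\mid s,a)\,\lambda\ln\big(\sum_{u\in\mathcal A}\exp(Q(s',u)/\lambda)\big)$. Weights $w_i>0$ with $\sum_i w_i=1$, $\|x\|_{p,w}=(\sum_i w_i|x_i|^p)^{1/p}$, $w_{\min}=\min_i w_i$, $w_{\max}=\max_i w_i$. $\Phi\in\mathbb{R}^{n\times d}$ is a full-rank feature matrix and $Q_\theta=\Phi\theta$. When $\gamma_{p,w}<1$, $F_\lambda$ is a contraction in $\|\cdot\|_{p,w}$ with unique fixed point $Q^*_\lambda$. *)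

From mathcomp Require Import all_boot all_order all_algebra.
From mathcomp Require Import reals sequences exp.
Set Implicit Arguments. Unset Strict Implicit. Unset Printing Implicit Defensive.
Import Order.TTheory GRing.Theory Num.Theory.
Local Open Scope ring_scope.

Section MDPDefs.
Variable R : realType.

Definition pwnorm (I : finType) (p : R) (w x : I -> R) : R :=
  (\sum_i w i * `|x i| `^ p) `^ p^-1.

(* w_max and w_min over a finite index type (weights are positive, so the
   seeds 0 and w_max do not affect the value for a nonempty index type) *)
Definition wmax (I : finType) (w : I -> R) : R := \big[Num.max/0]_i w i.
Definition wmin (I : finType) (w : I -> R) : R := \big[Num.min/wmax w]_i w i.

Variables (S A : finType) (d : nat).

Definition Qtheta (Phi : S * A -> 'I_d -> R) (th : 'I_d -> R) : S * A -> R :=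
  fun i => \sum_j Phi i j * th j.

Definition full_rank (Phi : S * A -> 'I_d -> R) : Prop :=
  forall th : 'I_d -> R, (forall i, Qtheta Phi th i = 0) -> forall j, th j = 0.

Definition Fsoft (gamma lam : R) (P : S -> A -> S -> R) (Rw : S -> A -> R)
  (Q : S * A -> R) : S * A -> R :=
  fun sa => Rw sa.1 sa.2 + gamma * \sum_(s' : S) P sa.1 sa.2 s' *
             (lam * ln (\sum_(u : A) expR (Q (s', u) / lam))).

Definition f_p (p gamma lam : R) (P : S -> A -> S -> R) (Rw : S -> A -> R)
  (w : S * A -> R) (Phi : S * A -> 'I_d -> R) (th : 'I_d -> R) : R :=
  p^-1 * (pwnorm p w (fun i => Fsoft gamma lam P Rw (Qtheta Phi th) i
                                - Qtheta Phi th i)) `^ p.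

Definition gamma_pw (p gamma : R) (w : S * A -> R) : R :=
  gamma * (#|{: S * A}|%:R : R) `^ p^-1 * (wmax w / wmin w) `^ p^-1.

End MDPDefs.

(* F_lambda is a gamma-contraction for the sup norm, because log-sum-exp is monotone
   and commutes with adding a constant. Since sum_i w_i = 1, the weighted p-norm of a
   constant is that constant, and |x_j| <= (n w_max / w_min)^(1/p) ||x||_{p,w}; hence
   F_lambda is a gamma_{p,w}-contraction for ||.||_{p,w}. For any contraction F with
   factor g and fixed point Q*, Minkowski's inequality gives
     (1 - g) ||Q - Q*|| <= ||F Q - Q|| <= (1 + g) ||Q - Q*||,
   and chaining the two bounds through the minimality of the residual at theta*_p
   yields the constant (1 + g) / (1 - g). *)

From mathcomp Require Import all_boot all_order all_algebra.
From mathcomp Require Import reals sequences exp.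
From mathcomp Require Import interval_inference classical_sets convex hoelder.
From mathcomp Require Import ring lra.
Import Order.TTheory GRing.Theory Num.Theory.
Local Open Scope ring_scope.

Section PowR.
Context {R : realType}.
Implicit Types a b p t u v x y : R.

Lemma powRK {p a} : 0 < p -> 0 <= a -> (a `^ p) `^ p^-1 = a.
Proof. by move=> p_gt0 a_ge0; rewrite -powRrM mulfV ?gt_eqF ?powRr1. Qed.

Lemma powRVK {p a} : 0 < p -> 0 <= a -> (a `^ p^-1) `^ p = a.
Proof. by move=> p_gt0 a_ge0; rewrite -powRrM mulVf ?gt_eqF ?powRr1. Qed.

Lemma powRVr p a : 0 <= a -> a^-1 `^ p = (a `^ p)^-1.
Proof. by move=> a_ge0; rewrite -powR_inv1 // -powRrM mulN1r powRN. Qed.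

Lemma ler_powR2 {p a b} : 0 < p -> 0 <= a -> 0 <= b -> (a `^ p <= b `^ p) = (a <= b).
Proof.
move=> p_gt0 a_ge0 b_ge0; apply/idP/idP => le_ab; last first.
  by apply: ge0_ler_powR; rewrite ?nnegrE ?(ltW p_gt0).
rewrite -(powRK p_gt0 a_ge0) -(powRK p_gt0 b_ge0).
by apply: ge0_ler_powR; rewrite ?nnegrE ?invr_ge0 ?powR_ge0 ?(ltW p_gt0).
Qed.

Lemma convex_powR_le p t x y : 1 <= p -> 0 <= t <= 1 -> 0 <= x -> 0 <= y ->
  (t * x + (1 - t) * y) `^ p <= t * x `^ p + (1 - t) * y `^ p.
Proof.
move=> p_ge1 /andP[t_ge0 t_le1] x_ge0 y_ge0.
have := convex_powR p_ge1 (Itv01 t_ge0 t_le1) (x := x) (y := y).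
rewrite !inE /= !in_itv /= x_ge0 y_ge0 /= => /(_ isT isT).
by rewrite !convRE.
Qed.

Lemma powR_normD_le p a b u v : 1 <= p -> 0 < a -> 0 < b ->
  `|u + v| `^ p <= (a + b) `^ p *
    (a / (a + b) * (`|u| `^ p / a `^ p) + b / (a + b) * (`|v| `^ p / b `^ p)).
Proof.
move=> p_ge1 a_gt0 b_gt0; have p_ge0 : 0 <= p := le_trans ler01 p_ge1.
have [a_ge0 b_ge0] := (ltW a_gt0, ltW b_gt0).
have ab_gt0 : 0 < a + b := addr_gt0 a_gt0 b_gt0.
have ab_ge0 := ltW ab_gt0.
have t_ge0 : 0 <= a / (a + b) by rewrite divr_ge0 // ltW.
have t_le1 : a / (a + b) <= 1 by rewrite ler_pdivrMr // mul1r lerDl.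
have -> : b / (a + b) = 1 - a / (a + b) by field; rewrite gt_eqF.
have uv_split : `|u| + `|v| =
    (a + b) * (a / (a + b) * (`|u| / a) + (1 - a / (a + b)) * (`|v| / b)).
  by field; rewrite !gt_eqF.
have powR_div z c : 0 <= z -> 0 <= c -> z `^ p / c `^ p = (z / c) `^ p.
  by move=> z_ge0 c_ge0; rewrite powRM ?invr_ge0 // powRVr.
rewrite !powR_div //.
apply: (@le_trans _ _ ((`|u| + `|v|) `^ p)).
  by apply: ge0_ler_powR; rewrite ?nnegrE ?addr_ge0 // ler_normD.
rewrite uv_split powRM ?addr_ge0 ?mulr_ge0 ?subr_ge0 ?invr_ge0 //.
apply: ler_wpM2l; first exact: powR_ge0.
by apply: convex_powR_le; rewrite ?t_ge0 ?t_le1 ?divr_ge0.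
Qed.

End PowR.

Section Weights.
Context {R : realType} {I : finType} {w : I -> R}.

Lemma le_wmax i : w i <= wmax w.
Proof. exact: le_bigmax. Qed.

Lemma wmin_le i : wmin w <= w i.
Proof. exact: bigmin_le. Qed.

Lemma wmax_ge0 : 0 <= wmax w.
Proof. exact: bigmax_ge_id. Qed.

Hypothesis w_gt0 : forall i, 0 < w i.

Lemma wmin_ge0 : 0 <= wmin w.
Proof.
rewrite /wmin; elim/big_ind: _ => [|a b a_ge0 b_ge0|i _]; last exact: ltW.
- exact: wmax_ge0.
- by rewrite le_min a_ge0 b_ge0.
Qed.

Lemma wmin_gt0 (i0 : I) : 0 < wmin w.
Proof.
rewrite /wmin; elim/big_ind: _ => [|a b a_gt0 b_gt0|i _]; last exact: w_gt0.
- exact: lt_le_trans (w_gt0 i0) (le_wmax i0).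
- by rewrite lt_min a_gt0 b_gt0.
Qed.

Lemma card_wmax_ge1 : \sum_i w i = 1 -> 1 <= #|I|%:R * wmax w.
Proof.
move=> w_sum1; rewrite -[leLHS]w_sum1 mulr_natl -sumr_const.
by apply: ler_sum => i _; exact: le_wmax.
Qed.

End Weights.

Section WeightedNorm.
Context {R : realType} {I : finType} {p : R} {w : I -> R}.
Hypothesis p_gt0 : 0 < p.
Hypothesis w_gt0 : forall i, 0 < w i.
Implicit Types x y : I -> R.

Let p_ge0 : 0 <= p. Proof. exact: ltW. Qed.
Let w_ge0 i : 0 <= w i. Proof. exact: ltW. Qed.

Let wsum_ge0 x : 0 <= \sum_i w i * `|x i| `^ p.
Proof. by apply: sumr_ge0 => i _; rewrite mulr_ge0 ?powR_ge0. Qed.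

Lemma pwnorm_ge0 x : 0 <= pwnorm p w x.
Proof. exact: powR_ge0. Qed.

Lemma pwnorm_powR x : pwnorm p w x `^ p = \sum_i w i * `|x i| `^ p.
Proof. exact: powRVK. Qed.

Lemma le_pwnorm x y : (forall i, `|x i| <= `|y i|) -> pwnorm p w x <= pwnorm p w y.
Proof.
move=> le_xy; apply: ge0_ler_powR; rewrite ?nnegrE ?invr_ge0 ?wsum_ge0 //.
apply: ler_sum => i _; rewrite ler_wpM2l //.
by apply: ge0_ler_powR; rewrite ?nnegrE.
Qed.

Lemma pwnorm_subC x y :
  pwnorm p w (fun i => x i - y i) = pwnorm p w (fun i => y i - x i).
Proof. by rewrite /pwnorm; under eq_bigr do rewrite distrC. Qed.

Lemma pwnorm_cst c : \sum_i w i = 1 -> 0 <= c -> pwnorm p w (fun=> c) = c.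
Proof. by move=> w_sum1 c_ge0; rewrite /pwnorm -big_distrl /= w_sum1 mul1r ger0_norm ?powRK. Qed.

Lemma pwnorm_eq0 x : pwnorm p w x = 0 -> forall i, x i = 0.
Proof.
move=> /(congr1 (fun a => a `^ p)); rewrite /= pwnorm_powR powR0 ?gt_eqF // => /eqP.
rewrite psumr_eq0 => [/allP eq0 i|i _]; last by rewrite mulr_ge0 ?powR_ge0.
move: (eq0 i (mem_index_enum i)).
by rewrite mulf_eq0 gt_eqF //= powR_eq0 normr_eq0 => /andP[/eqP].
Qed.

Lemma normr_le_pwnorm x j : `|x j| <= (w j)^-1 `^ p^-1 * pwnorm p w x.
Proof.
have wj_gt0 := w_gt0 j.
rewrite -powRM ?invr_ge0 // -(ler_powR2 p_gt0) ?powR_ge0 // powRVK ?mulr_ge0 ?invr_ge0 //.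
rewrite ler_pdivlMl // (bigD1 j) //= lerDl.
by apply: sumr_ge0 => i _; rewrite mulr_ge0 ?powR_ge0.
Qed.

Lemma normr_le_pwnorm_card x j : \sum_i w i = 1 ->
  `|x j| <= (#|I|%:R * (wmax w / wmin w)) `^ p^-1 * pwnorm p w x.
Proof.
move=> w_sum1; apply: (le_trans (normr_le_pwnorm x j)).
have wmin_gt0 := wmin_gt0 w_gt0 j.
apply: ler_wpM2r; first exact: pwnorm_ge0.
apply: ge0_ler_powR; rewrite ?nnegrE ?invr_ge0 ?(ltW wmin_gt0) //.
  by rewrite mulr_ge0 ?divr_ge0 ?wmax_ge0 ?(ltW wmin_gt0).
rewrite mulrA -[_^-1]mul1r ler_pM ?invr_ge0 ?(ltW wmin_gt0) ?card_wmax_ge1 //.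
by rewrite lef_pV2 ?posrE ?wmin_le.
Qed.

End WeightedNorm.

Section Minkowski.
Context {R : realType} {I : finType} {p : R} {w : I -> R}.
Hypothesis p_ge1 : 1 <= p.
Hypothesis w_gt0 : forall i, 0 < w i.
Implicit Types x y z : I -> R.

Let p_gt0 : 0 < p. Proof. exact: lt_le_trans ltr01 p_ge1. Qed.

Lemma pwsum_normD_le a b x y : 0 < a -> 0 < b ->
  \sum_i w i * `|x i| `^ p = a `^ p -> \sum_i w i * `|y i| `^ p = b `^ p ->
  \sum_i w i * `|x i + y i| `^ p <= (a + b) `^ p.
Proof.
move=> a_gt0 b_gt0 sum_x sum_y.
have [ap_gt0 bp_gt0] := (powR_gt0 p a_gt0, powR_gt0 p b_gt0).
apply: (le_trans (ler_sum _ (fun i _ =>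
  ler_wpM2l (ltW (w_gt0 i)) (@powR_normD_le _ p a b (x i) (y i) p_ge1 a_gt0 b_gt0)))).
set c := (a + b) `^ p.
have -> : \sum_i w i * (c * (a / (a + b) * (`|x i| `^ p / a `^ p)
                             + b / (a + b) * (`|y i| `^ p / b `^ p)))
    = c * (a / (a + b) / a `^ p * \sum_i w i * `|x i| `^ p
           + b / (a + b) / b `^ p * \sum_i w i * `|y i| `^ p).
  rewrite !big_distrr -big_split big_distrr /=.
  by apply: eq_bigr => i _; ring.
rewrite sum_x sum_y !divfK ?gt_eqF // -mulrDl divff ?mulr1 //.
by rewrite gt_eqF ?addr_gt0.
Qed.

Lemma ler_pwnormD x y :
  pwnorm p w (fun i => x i + y i) <= pwnorm p w x + pwnorm p w y.
Proof.
have [a_ge0 b_ge0] := (pwnorm_ge0 (p := p) (w := w) x, pwnorm_ge0 (p := p) (w := w) y).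
have [/(pwnorm_eq0 p_gt0 w_gt0) x0 | a_neq0] := eqVneq (pwnorm p w x) 0.
  apply: ler_wpDl a_ge0 (le_pwnorm p_gt0 w_gt0 _ _ _) => i.
  by rewrite x0 add0r lexx.
have [/(pwnorm_eq0 p_gt0 w_gt0) y0 | b_neq0] := eqVneq (pwnorm p w y) 0.
  apply: ler_wpDr b_ge0 (le_pwnorm p_gt0 w_gt0 _ _ _) => i.
  by rewrite y0 addr0 lexx.
have a_gt0 : 0 < pwnorm p w x by rewrite lt_def a_neq0 a_ge0.
have b_gt0 : 0 < pwnorm p w y by rewrite lt_def b_neq0 b_ge0.
rewrite -(ler_powR2 p_gt0 (pwnorm_ge0 _) (addr_ge0 a_ge0 b_ge0)) [leLHS](pwnorm_powR p_gt0 w_gt0).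
exact: pwsum_normD_le a_gt0 b_gt0 (esym (pwnorm_powR p_gt0 w_gt0 x))
                                  (esym (pwnorm_powR p_gt0 w_gt0 y)).
Qed.

Lemma ler_pwnorm_distD x y z :
  pwnorm p w (fun i => x i - z i)
    <= pwnorm p w (fun i => x i - y i) + pwnorm p w (fun i => y i - z i).
Proof.
apply: le_trans (ler_pwnormD _ _); apply: (le_pwnorm p_gt0 w_gt0) => i.
by rewrite addrA subrK lexx.
Qed.

End Minkowski.

Section ContractionFixpoint.
Context {R : realType} {I : finType} {p : R} {w : I -> R}.
Context {F : (I -> R) -> I -> R} {g : R} {Qs : I -> R}.
Hypothesis p_ge1 : 1 <= p.
Hypothesis w_gt0 : forall i, 0 < w i.
Hypothesis F_contraction : forall Q Q',
  pwnorm p w (fun i => F Q i - F Q' i) <= g * pwnorm p w (fun i => Q i - Q' i).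
Hypothesis F_Qs : F Qs = Qs.

Lemma pwnorm_fix_le_residual Q :
  (1 - g) * pwnorm p w (fun i => Q i - Qs i) <= pwnorm p w (fun i => F Q i - Q i).
Proof.
(* [lra] runs before the [pwnorm] facts enter the context: comparing those atoms by
   unification would unfold [powR] and take forever. *)
have key (d r r' t : R) : d <= r' + t -> r' = r -> t <= g * d -> (1 - g) * d <= r.
  by move=> *; lra.
have tri := ler_pwnorm_distD p_ge1 w_gt0 Q (F Q) Qs.
have contr := F_contraction Q Qs; rewrite F_Qs in contr.
exact: key tri (pwnorm_subC _ _) contr.
Qed.

Lemma pwnorm_residual_le_fix Q :
  pwnorm p w (fun i => F Q i - Q i) <= (1 + g) * pwnorm p w (fun i => Q i - Qs i).
Proof.
have key (d r t t' : R) : r <= t + t' -> t <= g * d -> t' = d -> r <= (1 + g) * d.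
  by move=> *; lra.
have tri := ler_pwnorm_distD p_ge1 w_gt0 (F Q) Qs Q.
have contr := F_contraction Q Qs; rewrite F_Qs in contr.
exact: key tri contr (pwnorm_subC _ _).
Qed.

End ContractionFixpoint.

Lemma log_sum_exp_le_shift {R : realType} {A : finType} (lam c : R) (u0 : A)
    (q q' : A -> R) :
  0 < lam -> (forall u, q u <= q' u + c) ->
  lam * ln (\sum_u expR (q u / lam)) <= lam * ln (\sum_u expR (q' u / lam)) + c.
Proof.
move=> lam_gt0 le_qq'.
have sum_gt0 (r : A -> R) : 0 < \sum_u expR (r u / lam).
  rewrite (bigD1 u0) //= ltr_pwDl ?expR_gt0 //.
  by apply: sumr_ge0 => u _; exact: expR_ge0.
have sum_le : \sum_u expR (q u / lam) <= expR (c / lam) * \sum_u expR (q' u / lam).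
  rewrite big_distrr /=; apply: ler_sum => u _.
  by rewrite -expRD ler_expR -mulrDl ler_pM2r ?invr_gt0 // addrC.
have ln_le : ln (\sum_u expR (q u / lam)) <= c / lam + ln (\sum_u expR (q' u / lam)).
  by rewrite -[c / lam]expRK -lnM ?posrE ?expR_gt0 // ler_ln ?posrE ?mulr_gt0 ?expR_gt0.
have -> : lam * ln (\sum_u expR (q' u / lam)) + c
    = lam * (c / lam + ln (\sum_u expR (q' u / lam))).
  by rewrite mulrDr mulrCA divff ?gt_eqF // mulr1 addrC.
by rewrite ler_pM2l.
Qed.

Section SoftBellman.
Context {R : realType} {S A : finType}.
Context {P : S -> A -> S -> R} {Rw : S -> A -> R} {gamma lam : R}.
Hypothesis gamma_ge0 : 0 <= gamma.
Hypothesis lam_gt0 : 0 < lam.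
Hypothesis P_ge0 : forall s a s', 0 <= P s a s'.
Hypothesis P_sum1 : forall s a, \sum_(s' : S) P s a s' = 1.

Local Notation F := (Fsoft gamma lam P Rw).

Lemma Fsoft_le_shift (Q Q' : S * A -> R) c i :
  (forall j, Q j <= Q' j + c) -> F Q i <= F Q' i + gamma * c.
Proof.
move=> le_QQ'; rewrite /Fsoft -addrA lerD2l -mulrDr; apply: ler_wpM2l => //.
rewrite -[c]mul1r -(P_sum1 i.1 i.2) big_distrl -big_split /=.
apply: ler_sum => s' _; rewrite -mulrDr; apply: ler_wpM2l => //.
exact: log_sum_exp_le_shift i.2 _ _ lam_gt0 (fun u => le_QQ' (s', u)).
Qed.

Lemma Fsoft_sup_contraction (Q Q' : S * A -> R) c i :
  (forall j, `|Q j - Q' j| <= c) -> `|F Q i - F Q' i| <= gamma * c.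
Proof.
move=> le_QQ'; rewrite ler_norml; apply/andP; split.
  rewrite lerNl opprB lerBlDr addrC; apply: Fsoft_le_shift => j.
  by have := le_QQ' j; rewrite distrC ler_norml => /andP[_]; rewrite lerBlDr addrC.
rewrite lerBlDr addrC; apply: Fsoft_le_shift => j.
by have := le_QQ' j; rewrite ler_norml => /andP[_]; rewrite lerBlDr addrC.
Qed.

Lemma Fsoft_pw_contraction {p : R} {w : S * A -> R} :
  0 < p -> (forall i, 0 < w i) -> \sum_i w i = 1 ->
  forall Q Q' : S * A -> R,
  pwnorm p w (fun i => F Q i - F Q' i)
    <= gamma_pw p gamma w * pwnorm p w (fun i => Q i - Q' i).
Proof.
move=> p_gt0 w_gt0 w_sum1 Q Q'.
pose K := (#|{: S * A}|%:R * (wmax w / wmin w)) `^ p^-1.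
pose d := pwnorm p w (fun i => Q i - Q' i).
have gKd_ge0 : 0 <= gamma * (K * d).
  by rewrite mulr_ge0 // mulr_ge0 // ?powR_ge0 // pwnorm_ge0.
have F_sup i : `|F Q i - F Q' i| <= `|gamma * (K * d)|.
  rewrite [`|gamma * _|]ger0_norm //; apply: Fsoft_sup_contraction => j.
  exact: normr_le_pwnorm_card.
have -> : gamma_pw p gamma w * d = gamma * (K * d).
  by rewrite /gamma_pw /K [in RHS]powRM ?ler0n ?divr_ge0 ?wmax_ge0 ?wmin_ge0 // !mulrA.
rewrite -[gamma * (K * d)](pwnorm_cst p_gt0 _ w_sum1 gKd_ge0).
exact: le_pwnorm p_gt0 w_gt0 _ _ F_sup.
Qed.

End SoftBellman.

Theorem theorem1 (R : realType) (S A : finType) (d : nat)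
  (P : S -> A -> S -> R) (Rw : S -> A -> R) (gamma lam p : R)
  (w : S * A -> R) (Phi : S * A -> 'I_d -> R)
  (Qstar : S * A -> R) (thstar : 'I_d -> R) :
  0 <= gamma -> gamma < 1 -> 0 < lam ->
  (forall s a s', 0 <= P s a s') -> (forall s a, \sum_(s' : S) P s a s' = 1) ->
  (forall i, 0 < w i) -> \sum_i w i = 1 ->
  full_rank Phi ->
  1 < p ->
  gamma_pw p gamma w < 1 ->
  Fsoft gamma lam P Rw Qstar = Qstar ->
  (forall th, f_p p gamma lam P Rw w Phi thstar <= f_p p gamma lam P Rw w Phi th) ->
  forall th : 'I_d -> R,
    pwnorm p w (fun i => Qtheta Phi thstar i - Qstar i)
    <= (1 + gamma_pw p gamma w) / (1 - gamma_pw p gamma w)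
       * pwnorm p w (fun i => Qtheta Phi th i - Qstar i).
Proof.
move=> gamma_ge0 _ lam_gt0 P_ge0 P_sum1 w_gt0 w_sum1 _ p_gt1 g_lt1 Qstar_fix
  thstar_min th.
have p_gt0 : 0 < p := lt_trans ltr01 p_gt1.
have contr := Fsoft_pw_contraction (Rw := Rw) gamma_ge0 lam_gt0 P_ge0 P_sum1 p_gt0 w_gt0 w_sum1.
have residual_le :
    pwnorm p w (fun i => Fsoft gamma lam P Rw (Qtheta Phi thstar) i - Qtheta Phi thstar i)
    <= pwnorm p w (fun i => Fsoft gamma lam P Rw (Qtheta Phi th) i - Qtheta Phi th i).
  have := thstar_min th; rewrite /f_p ler_pM2l; last by rewrite invr_gt0.
  by rewrite (ler_powR2 p_gt0 (pwnorm_ge0 _) (pwnorm_ge0 _)).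
have lower := pwnorm_fix_le_residual (ltW p_gt1) w_gt0 contr Qstar_fix (Qtheta Phi thstar).
have upper := pwnorm_residual_le_fix (ltW p_gt1) w_gt0 contr Qstar_fix (Qtheta Phi th).
rewrite mulrAC ler_pdivlMr; last by rewrite subr_gt0.
rewrite mulrC.
exact: le_trans lower (le_trans residual_le upper).
Qed.
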